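(* Let $G$ be a locally compact Hausdorff group, $H,K$ closed subgroups of $G$, and $N$ the normalizer of $K$ in $G$. If $\mu$ is an $N$-strongly quasi-invariant measure on $K\backslash G/H$ which arises from a rho-function, then $\operatorname{supp}\mu=K\backslash G/H$.
   Context: $dx,dh,dk$ are left Haar measures on $G,H,K$ with modular functions $\Delta_G,\Delta_H,\Delta_K$. $N=\{g\in G: gK=Kg\}$. $K\backslash G/H=\{KxH\}$ carries the quotient topology from $q(x)=KxH=:\ddot x$; $N$ acts on it by $n\cdot KxH=KnxH$. A rho-function for $(K,G,H)$ is a non-negative locally integrable $\rho$ on $G$ with $\rho(kxh)=\frac{\Delta_K(k)\Delta_H(h)}{\Delta_G(h)}\rho(x)$. For a positive Radon measure $\mu$ on $K\backslash G/H$ and $n\in N$, $\mu_n(E)=\mu(n\cdot E)$; $\mu$ is $N$-strongly quasi-invariant if there is a continuous positive $\lambda$ on $N\times K\backslash G/H$ with $d\mu_n=\lambda(n,\cdot)\,d\mu$ for all $n\in N$. $\mu$ arises from a rho-function if there is a rho-function $\rho:G\to(0,+\infty)$ with $\int_{K\backslash G/H}\int_K\int_H f(k^{-1}xh)\,dh\,dk\,d\mu(\ddot x)=\int_G f(x)\rho(x)\,dx$ for all $f\in C_c(G)$. *)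

From HB Require Import structures.
From mathcomp Require Import all_boot all_order all_algebra.
From mathcomp Require Import all_classical all_reals all_analysis.
Set Implicit Arguments. Unset Strict Implicit. Unset Printing Implicit Defensive.
Import Order.TTheory GRing.Theory Num.Theory numFieldNormedType.Exports.
Local Open Scope classical_set_scope.
Local Open Scope ring_scope.

Notation BorelT T := (g_sigma_algebraType (@open T)).

Definition is_group {G : Type} (mul : G -> G -> G) (inv : G -> G) (e : G) :=
  [/\ (forall x y z, mul x (mul y z) = mul (mul x y) z),
      (forall x, mul e x = x /\ mul x e = x) &
      (forall x, mul (inv x) x = e /\ mul x (inv x) = e)].

Definition is_LCH_group (G : topologicalType) (mul : G -> G -> G) (inv : G -> G) (e : G) :=
  [/\ is_group mul inv e,
      continuous (fun p : G * G => mul p.1 p.2),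
      continuous inv,
      hausdorff_space G &
      (forall x : G, exists C : set G, compact C /\ nbhs x C)].

Definition is_closed_subgroup (G : topologicalType) (mul : G -> G -> G) (inv : G -> G) (e : G)
  (H : set G) :=
  [/\ H e, (forall x y, H x -> H y -> H (mul x y)), (forall x, H x -> H (inv x)) & closed H].

Definition normalizer {G : Type} (mul : G -> G -> G) (K : set G) : set G :=
  [set g | mul g @` K = (fun k => mul k g) @` K].

Definition radon_measure {R : realType} (T : ptopologicalType)
  (mu : set (BorelT T) -> \bar R) :=
  [/\ (forall C : set T, compact C -> measurable (C : set (BorelT T)) -> (mu C < +oo)%E),
      (forall B : set (BorelT T), measurable B ->
          mu B = ereal_inf [set mu U | U in [set U : set T | open U /\ B `<=` U]]) &
      (forall U : set T, open U ->
          mu U = ereal_sup [set mu C | C in [set C : set T |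
                    [/\ compact C, measurable (C : set (BorelT T)) & C `<=` U]]])].

(* A left Haar measure of the closed subgroup H of G, viewed as a (Radon)
   measure on G concentrated on H (i.e. the push-forward by the inclusion).
   With H = setT this is a left Haar measure of G. *)
Definition left_haar_on {R : realType} (G : ptopologicalType) (mul : G -> G -> G)
  (H : set G) (nu : set (BorelT G) -> \bar R) :=
  [/\ nu (~` H) = 0%E,
      radon_measure nu,
      (forall h (B : set (BorelT G)), H h -> measurable B -> nu (mul h @` B) = nu B) &
      (forall U : set G, open U -> (U `&` H) !=set0 -> (0 < nu U)%E)].

Definition modular_function_of {R : realType} (G : ptopologicalType) (mul : G -> G -> G)
  (H : set G) (nu : set (BorelT G) -> \bar R) (Delta : G -> R) :=
  forall h (B : set (BorelT G)), H h -> measurable B ->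
    nu ((fun x => mul x h) @` B) = ((Delta h)%:E * nu B)%E.

Definition rho_function {R : realType} (G : ptopologicalType) (mul : G -> G -> G)
  (K H : set G) (dx : {measure set (BorelT G) -> \bar R}) (DG DH DK : G -> R)
  (rho : G -> R) :=
  [/\ (forall x, 0 <= rho x),
      measurable_fun setT (rho : BorelT G -> R),
      (forall C : set G, compact C -> dx.-integrable (C : set (BorelT G)) (EFin \o rho)) &
      (forall k x h, K k -> H h ->
          rho (mul (mul k x) h) = DK k * DH h / DG h * rho x)].

Definition Cc {R : realType} (G : topologicalType) (f : G -> R) :=
  continuous f /\ compact (closure [set x | f x != 0]).

Definition qrepr (G : ptopologicalType) (X : Type) (q : G -> X) (z : X) : G :=
  xget point (q @^-1` [set z]).

Definition arises_from_rho {R : realType} (G : ptopologicalType) (mul : G -> G -> G)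
  (inv : G -> G) (K H : set G) (dx dh dk : {measure set (BorelT G) -> \bar R})
  (DG DH DK : G -> R) (X : ptopologicalType) (q : G -> X)
  (mu : {measure set (BorelT X) -> \bar R}) :=
  exists rho : G -> R, [/\ (forall x, 0 < rho x),
    rho_function mul K H dx DG DH DK rho &
    (forall f : G -> R, Cc f ->
       (\int[mu]_z (\int[dk]_k (\int[dh]_h
            (f (mul (mul (inv k) (qrepr q z)) h))%:E)))%E
       = (\int[dx]_x (f x * rho x)%:E)%E)].

Definition act_set (G : Type) (X : Type) (mul : G -> G -> G) (q : G -> X) (n : G)
  (E : set X) : set X := [set q (mul n x) | x in q @^-1` E].

Definition strongly_quasi_invariant {R : realType} (G : ptopologicalType)
  (mul : G -> G -> G) (N : set G) (X : ptopologicalType) (q : G -> X)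
  (mu : {measure set (BorelT X) -> \bar R}) :=
  exists lambda : G -> X -> R,
    [/\ {within [set p : G * X | N p.1], continuous (fun p : G * X => lambda p.1 p.2)},
        (forall n z, N n -> 0 < lambda n z) &
        (forall n (E : set (BorelT X)), N n -> measurable E ->
           mu (act_set mul q n E) = (\int[mu]_(z in E) (lambda n z)%:E)%E)].

Definition msupport {R : realType} (X : ptopologicalType) (mu : set (BorelT X) -> \bar R)
  : set X :=
  ~` \bigcup_(U in [set U : set X | open U /\ mu U = 0%E]) U.

(* If a nonempty open set U of K\G/H were mu-null, take a compactly supported
   continuous bump f >= 0 on G vanishing off q^-1(U) and equal to 1 at some
   point. In the rho-function identity the integrand on the left vanishes for z
   outside U (the double coset of z misses q^-1(U)), so the left side is an
   integral concentrated on a null set and is 0, while the right side is the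
   Haar integral of f rho > 0 over the nonempty open set [f > 0], hence
   positive. *)

From HB Require Import structures.
From mathcomp Require Import all_boot all_order all_algebra.
From mathcomp Require Import all_classical all_reals all_analysis.
From mathcomp Require Import measurable_realfun.
Local Open Scope classical_set_scope.
Local Open Scope ring_scope.

Set Implicit Arguments. Unset Strict Implicit. Unset Printing Implicit Defensive.
Import Order.TTheory GRing.Theory Num.Theory numFieldNormedType.Exports.
Import HBNNSimple.

Lemma open_measurable_BorelT (T : ptopologicalType) (U : set T) :
  open U -> measurable (U : set (BorelT T)).
Proof. by move=> oU; apply: sub_sigma_algebra. Qed.

Lemma continuous_measurable_BorelT (R : realType) (T : ptopologicalType) (f : T -> R) :
  continuous f -> measurable_fun setT (f : BorelT T -> R).
Proof.
move=> /continuousP cf; apply: (measurability _ (RGenOpens.measurableE R)).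
move=> _ [_ [a [b ->] <-]]; rewrite setTI; apply: open_measurable_BorelT.
exact/cf/interval_open.
Qed.

Section integral_null_support.
Context d (T : measurableType d) (R : realType) (m : {measure set T -> \bar R}).
Variable N : set T.
Hypotheses (mN : measurable N) (mN0 : m N = 0%E).

(* No measurability of [f] is required: the integral of a nonnegative function
   is a supremum over the simple functions below it, which all vanish off [N]. *)
Lemma ge0_integral_null_support (f : T -> \bar R) :
  (forall x, 0 <= f x)%E -> (forall x, ~ N x -> f x = 0%E) ->
  (\int[m]_x f x = 0)%E.
Proof.
move=> f0 fN; apply/eqP; rewrite eq_le integral_ge0 ?andbT//.
rewrite ge0_integralTE//; apply/ge_ereal_sup => _ [h /= hf <-].
have := @integral_nnsfun _ _ _ m setT measurableT h; rewrite patch_setT => <-.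
have -> : (\int[m]_x (h x)%:E = \int[m]_(x in N) (h x)%:E)%E.
  rewrite [RHS]integral_mkcond; apply: eq_integral => x _.
  rewrite /patch; case: ifPn => // /negP; rewrite inE => Nx.
  have := hf x; rewrite fN// lee_fin => hx0.
  by apply/eqP; rewrite eq_le lee_fin hx0 lee_fin fun_ge0.
rewrite null_set_integral//.
by apply/measurable_EFinP; exact: measurable_funP.
Qed.

Lemma integral_null_support (f : T -> \bar R) :
  (forall x, ~ N x -> f x = 0%E) -> (\int[m]_x f x = 0)%E.
Proof.
move=> fN; rewrite integralE.
rewrite (ge0_integral_null_support (funepos_ge0 f)); last first.
  by move=> x /fN fx0; rewrite funeposE fx0 maxxx.
rewrite (ge0_integral_null_support (funeneg_ge0 f)) ?subee//.
by move=> x /fN fx0; rewrite funenegE fx0 oppe0 maxxx.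
Qed.

End integral_null_support.

Lemma Cc_bump (R : realType) (T : ptopologicalType) (hsT : hausdorff_space T)
    (lcT : forall x : T, exists C : set T, compact C /\ nbhs x C)
    (V : set T) (x0 : T) : open V -> V x0 ->
  exists f : T -> R, [/\ Cc f, (forall x, 0 <= f x), f x0 = 1 &
     forall x, ~ V x -> f x = 0].
Proof.
move=> oV Vx0.
have lc_setT : locally_compact [set: T].
  move=> x _; rewrite withinET; have [C [cC nC]] := lcT x.
  by exists C => //; split => //; exact: compact_closed.
have [C [cC nC]] := lcT x0.
have : nbhs x0 (V `&` C) by apply: filterI => //; exact: open_nbhs_nbhs.
rewrite nbhsE => -[W [oW Wx0] WVC].
have sep : uniform_separator [set x0] (~` W).
  by apply: (@locally_compact_completely_regular T R lc_setT hsT); [exact: open_closedC|].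
have [g [cg g01 gx0 gW]] := (@uniform_separatorP T R _ _).1 sep.
have g1 x : ~ W x -> g x = 1 by move=> nWx; apply: gW; exists x.
have gle1 x : g x <= 1.
  by have := g01 (g x) (ex_intro2 _ _ x I erefl); rewrite /= in_itv /= => /andP[].
exists (fun x => 1 - g x); split.
- split; first by move=> x; apply: cvgB; [exact: cvg_cst | exact: cg].
  apply: (subclosed_compact _ cC); first exact: closed_closure.
  rewrite (closure_id C).1; last exact: compact_closed.
  apply: closureS => x /= nz; apply: contrapT => nCx; move: nz.
  by rewrite g1 ?subrr ?eqxx// => /WVC [].
- by move=> x; rewrite subr_ge0 gle1.
- by rewrite (gx0 (g x0)) ?subr0//; exists x0.
- by move=> x nVx; rewrite g1 ?subrr // => /WVC [].
Qed.

Lemma integral_continuous_mul_pos_neq0 (R : realType) (T : ptopologicalType)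
    (m : {measure set (BorelT T) -> \bar R})
    (m_open_gt0 : forall U : set T, open U -> U !=set0 -> (0 < m U)%E)
    (f rho : T -> R) (x0 : T) :
  continuous f -> (forall x, 0 <= f x) -> 0 < f x0 ->
  (forall x, 0 < rho x) -> measurable_fun setT (rho : BorelT T -> R) ->
  (\int[m]_x (f x * rho x)%:E != 0)%E.
Proof.
move=> cf f0 fx0 rho0 mrho; apply/eqP => int0.
have mfrho : measurable_fun setT (fun x : BorelT T => (f x * rho x)%:E).
  apply/measurable_EFinP; apply: measurable_funM => //.
  exact: continuous_measurable_BorelT.
have : (\int[m]_x `|(f x * rho x)%:E| = 0)%E.
  rewrite -int0; apply: eq_integral => x _; rewrite gee0_abs// lee_fin.
  by rewrite mulr_ge0// ltW.
move=> /(ae_eq_integral_abs _ measurableT mfrho) [N [mN mN0 fN]].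
pose O := f @^-1` `]0, +oo[.
have oO : open O by apply: (continuousP _).1 => //; exact: interval_open.
have ON : O `<=` N.
  move=> x; rewrite /O /preimage /= in_itv /= andbT => fx.
  apply: fN => /= /(_ I) [] /eqP; rewrite mulf_eq0 => /orP[] /eqP h0.
  - by move: fx; rewrite h0 ltxx.
  - by have := rho0 x; rewrite h0 ltxx.
have mO_gt0 : (0 < m O)%E.
  by apply: m_open_gt0 => //; exists x0; rewrite /O /= in_itv /= fx0.
have mON := le_measure m (mem_set (open_measurable_BorelT oO)) (mem_set mN) ON.
have := lt_le_trans mO_gt0 mON.
by rewrite lt_neqAle eq_sym => /andP[/eqP/(_ mN0)].
Qed.

Lemma qreprK (G : ptopologicalType) (X : Type) (q : G -> X) :
  (forall z, exists x, q x = z) -> forall z, q (qrepr q z) = z.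
Proof. by move=> q_surj z; have := xgetPex point (q_surj z). Qed.

Lemma coset_average_integral_null (R : realType) (G : ptopologicalType)
    (mul : G -> G -> G) (inv : G -> G) (K H : set G)
    (dk dh : {measure set (BorelT G) -> \bar R})
    (X : ptopologicalType) (q : G -> X) (mu : {measure set (BorelT X) -> \bar R})
    (U : set X) (f : G -> R) :
  (forall z, exists x, q x = z) ->
  (forall x k h, K k -> H h -> q (mul (mul k x) h) = q x) ->
  (forall k, K k -> K (inv k)) -> closed K -> closed H ->
  dk (~` K) = 0%E -> dh (~` H) = 0%E ->
  open U -> mu U = 0%E -> (forall x, ~ U (q x) -> f x = 0) ->
  (\int[mu]_z (\int[dk]_k (\int[dh]_h
     (f (mul (mul (inv k) (qrepr q z)) h))%:E)) = 0)%E.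
Proof.
move=> q_surj q_coset invK clK clH dkK dhH oU muU f_off.
apply: (integral_null_support (open_measurable_BorelT oU) muU) => z Uz.
apply: (integral_null_support (open_measurable_BorelT (closed_openC clK)) dkK).
move=> k /contrapT Kk.
apply: (integral_null_support (open_measurable_BorelT (closed_openC clH)) dhH).
move=> h /contrapT Hh.
rewrite f_off// q_coset//; last exact: invK.
by have -> : q (qrepr q z) = z := qreprK q_surj z.
Qed.

Theorem proposition4p6 (R : realType) (G : ptopologicalType)
  (mul : G -> G -> G) (inv : G -> G) (e : G)
  (hG : is_LCH_group mul inv e)
  (H K : set G)
  (hH : is_closed_subgroup mul inv e H) (hK : is_closed_subgroup mul inv e K)
  (dx dh dk : {measure set (BorelT G) -> \bar R})
  (hdx : left_haar_on mul setT dx) (hdh : left_haar_on mul H dh)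
  (hdk : left_haar_on mul K dk)
  (DG DH DK : G -> R)
  (hDG : modular_function_of mul setT dx DG) (hDH : modular_function_of mul H dh DH)
  (hDK : modular_function_of mul K dk DK)
  (X : ptopologicalType) (q : G -> X)
  (hq_surj : forall z : X, exists x : G, q x = z)
  (hq_fib : forall x y : G, q x = q y <-> exists k h, [/\ K k, H h & y = mul (mul k x) h])
  (hq_top : forall U : set X, open U <-> open (q @^-1` U))
  (mu : {measure set (BorelT X) -> \bar R})
  (hmu : radon_measure mu)
  (hsqi : strongly_quasi_invariant mul (normalizer mul K) q mu)
  (hrho : arises_from_rho mul inv K H dx dh dk DG DH DK q mu) :
  msupport mu = setT.
Proof.
have [_ _ _ hsG lcG] := hG.
have [_ _ _ clH] := hH; have [_ _ invK clK] := hK.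
have [dkK _ _ _] := hdk; have [dhH _ _ _] := hdh; have [_ _ _ dx_gt0] := hdx.
have q_coset x k h : K k -> H h -> q (mul (mul k x) h) = q x.
  by move=> Kk Hh; apply/esym/hq_fib; exists k, h.
rewrite /msupport; apply/seteqP; split => // z _ [U [oU muU] Uz].
have [x0 qx0] := hq_surj z.
have qUx0 : (q @^-1` U) x0 by rewrite /preimage /= qx0.
have [f [f_Cc f_ge0 fx0 f_off]] := Cc_bump R hsG lcG (proj1 (hq_top U) oU) qUx0.
have [rho [rho_gt0 [_ mrho _ _] rho_id]] := hrho.
have dx_open_gt0 (V : set G) : open V -> V !=set0 -> (0 < dx V)%E.
  by move=> oV V0; apply: dx_gt0 => //; rewrite setIT.
have f_x0_gt0 : 0 < f x0 by rewrite fx0 ltr01.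
have := integral_continuous_mul_pos_neq0 dx_open_gt0 f_Cc.1 f_ge0 f_x0_gt0 rho_gt0 mrho.
rewrite -rho_id//.
have lhs0 := coset_average_integral_null hq_surj q_coset invK clK clH dkK dhH
  oU muU f_off.
by rewrite lhs0 eqxx.
Qed.
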